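(* Let $(G=(V,E),(p_e))$ be an IC model instance, $S\subseteq V$ with $S\neq V$, $\phi$ a realization, and $t\in\mathbb{Z}^+$. Let $\mathcal R$ be an RR-set generated with input $S,\phi,t$. Then for every $V^*\subseteq V$, \[(|V|-|S|)\cdot\mathbb{E}[\mathbb{I}(V^*\cap\mathcal R)]=\Delta f_t(S,V^*,\phi),\] where $\mathbb{I}(V^*\cap\mathcal R)=1$ if $V^*\cap\mathcal R\neq\emptyset$ and $0$ otherwise.
   Context: IC model: directed graph $G=(V,E)$, each edge $e$ independently live with probability $p_e\in(0,1]$. A realization is a pair $\phi=(L(\phi),D(\phi))$ of disjoint edge sets (known live, known dead edges); it is full if $L(\phi)\cup D(\phi)=E$; $\Psi$ is the set of full realizations. $\phi\prec\psi$ means $L(\phi)\subseteq L(\psi)$, $D(\phi)\subseteq D(\psi)$, and $\Pr[\psi\mid\phi]=\prod_{e\in L(\psi)\setminus L(\phi)}p_e\prod_{e\in D(\psi)\setminus D(\phi)}(1-p_e)$. For $S\subseteq V$ and full $\psi$, $A_t(S,\psi)$ is the set of nodes reachable from some node of $S$ via a path of at most $t$ edges all in $L(\psi)$. $\Delta_t(S,V^*,\psi)=|A_t(S\cup V^*,\psi)|-|A_t(S,\psi)|$ and $\Delta f_t(S,V^*,\phi)=\sum_{\psi\in\Psi,\phi\prec\psi}\Pr[\psi\mid\phi]\Delta_t(S,V^*,\psi)$. RR-set with input $S,\phi,t$: (1) for each edge not in $L(\phi)\cup D(\phi)$ sample its state independently (live w.p. $p_e$), keeping the states given by $\phi$ for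 the others, obtaining a full realization $\psi^*$; (2) choose a node $v\notin S$ uniformly at random and let $R_v$ be the set of nodes from which $v$ is reachable via a path of at most $t$ edges all live in $\psi^*$ (including $v$ itself); return $\mathcal R=R_v$ if $R_v\cap S=\emptyset$, and $\mathcal R=\emptyset$ otherwise. *)

From mathcomp Require Import all_boot all_order all_algebra.
Set Implicit Arguments. Unset Strict Implicit. Unset Printing Implicit Defensive.
Import Order.TTheory GRing.Theory Num.Theory.
Local Open Scope ring_scope.

Section IC.
Variables (V : finType) (R : realFieldType).
Notation edge := (V * V)%type.

(* A realization: a pair (L, D) of (known live, known dead) edge sets. *)
Definition realization := ({set edge} * {set edge})%type.

Definition is_realization (E : {set edge}) (phi : realization) : bool :=
  [&& phi.1 \subset E, phi.2 \subset E & [disjoint phi.1 & phi.2]].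

Definition is_full (E : {set edge}) (psi : realization) : bool :=
  is_realization E psi && (psi.1 :|: psi.2 == E).

Definition cond_pr (p : edge -> R) (phi psi : realization) : R :=
  (\prod_(e in psi.1 :\: phi.1) p e) * (\prod_(e in psi.2 :\: phi.2) (1 - p e)).

Definition prec (phi psi : realization) : bool :=
  (phi.1 \subset psi.1) && (phi.2 \subset psi.2).

Fixpoint reach (L : {set edge}) (t : nat) (X : {set V}) : {set V} :=
  match t with
  | 0 => X
  | t'.+1 => let Y := reach L t' X in
             Y :|: [set v | [exists u in Y, (u, v) \in L]]
  end.

Definition At (t : nat) (S : {set V}) (psi : realization) : {set V} :=
  reach psi.1 t S.

Definition Delta_t (t : nat) (S Vs : {set V}) (psi : realization) : R :=
  (#|At t (S :|: Vs) psi|)%:R - (#|At t S psi|)%:R.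

Definition Delta_f (E : {set edge}) (p : edge -> R) (t : nat) (S Vs : {set V})
  (phi : realization) : R :=
  \sum_(psi : realization | is_full E psi && prec phi psi)
     cond_pr p phi psi * Delta_t t S Vs psi.

Definition Rv (t : nat) (psi : realization) (v : V) : {set V} :=
  [set u | v \in reach psi.1 t [set u]].

Definition RRset (t : nat) (S : {set V}) (psi : realization) (v : V) : {set V} :=
  if [disjoint Rv t psi v & S] then Rv t psi v else set0.

(* Expectation of I(V* ∩ RR) where the RR set is generated with input S, phi, t:
   (1) every edge e in E \ (L(phi) ∪ D(phi)) is independently live w.p. p e;
       X denotes the set of sampled live edges, giving
       psi* = (L(phi) ∪ X, D(phi) ∪ (free \ X));
   (2) v is uniform in V \ S. *)
Definition RR_expect (E : {set edge}) (p : edge -> R) (t : nat) (S Vs : {set V})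
  (phi : realization) : R :=
  let free := E :\: (phi.1 :|: phi.2) in
  \sum_(X : {set edge} | X \subset free)
    (\prod_(e in free) (if e \in X then p e else 1 - p e)) *
    (\sum_(v in ~: S)
       (#|~: S|%:R)^-1 *
       (if Vs :&: RRset t S (phi.1 :|: X, phi.2 :|: (free :\: X)) v != set0
        then 1 else 0)).

End IC.

From mathcomp Require Import all_boot all_order all_algebra.
Import Order.TTheory GRing.Theory Num.Theory.
Local Open Scope ring_scope.

(* For a fixed full realization psi, a node v outside S is counted by
   Delta_t(S, V*, psi) iff it is reachable within t live edges from V* but
   not from S, i.e. iff R_v misses S and meets V*; hence
   Delta_t(S, V*, psi) = sum_{v notin S} I(V* meets the RR set rooted at v).
   Sampling the undetermined edges, X |-> (L(phi) ∪ X, D(phi) ∪ (free \ X)),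
   is a bijection onto the full realizations extending phi, and the sampling
   probability of X is Pr[psi | phi]. Averaging over X and over the uniform
   root v gives the identity, the factor |V| - |S| = |V \ S| coming from the
   root. *)

Section Reach.
Variables (V : finType) (L : {set V * V}).
Implicit Types X Y : {set V}.

Lemma mem_reach t X v :
  (v \in reach L t X) = [exists u in X, v \in reach L t [set u]].
Proof.
elim: t v => [|t IHt] v /=.
  apply/idP/exists_inP => [vX|[u uX]]; first by exists v; rewrite ?set11.
  by rewrite inE => /eqP->.
rewrite !inE IHt; apply/orP/exists_inP => [[/exists_inP[u uX vu]|]|[u uX]].
- by exists u; rewrite // inE vu.
- case/exists_inP=> w; rewrite IHt => /exists_inP[u uX wu] wv.
  by exists u; rewrite // !inE; apply/orP; right; apply/exists_inP; exists w.
- rewrite !inE => /orP[vu|/exists_inP[w wu wv]].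
    by left; apply/exists_inP; exists u.
  by right; apply/exists_inP; exists w; rewrite // IHt; apply/exists_inP; exists u.
Qed.

Lemma sub_reach t X : X \subset reach L t X.
Proof. by elim: t => //= t IHt; apply: subset_trans IHt (subsetUl _ _). Qed.

Lemma reachU t X Y : reach L t (X :|: Y) = reach L t X :|: reach L t Y.
Proof.
apply/setP=> v; rewrite inE !mem_reach; apply/exists_inP/orP.
  case=> u; rewrite inE => /orP[] uXY vu;
    [left|right]; by apply/exists_inP; exists u.
by case=> /exists_inP[u uXY vu]; exists u; rewrite // inE uXY ?orbT.
Qed.

End Reach.

Section RRSet.
Variables (V : finType) (t : nat) (psi : realization V).
Implicit Types S Vs : {set V}.

Lemma disjoint_Rv S v : [disjoint Rv t psi v & S] = (v \notin At t S psi).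
Proof.
rewrite /At mem_reach negb_exists_in disjoint_sym disjoints_subset.
by apply/subsetP/forall_inP => notRv u /notRv; rewrite !inE.
Qed.

Lemma meet_Rv Vs v : (Vs :&: Rv t psi v != set0) = (v \in At t Vs psi).
Proof.
rewrite /At mem_reach; apply/set0Pn/exists_inP => [[u]|[u uVs vu]].
  by rewrite !inE => /andP[uVs vu]; exists u.
by exists u; rewrite !inE uVs.
Qed.

Lemma meet_RRset S Vs v :
  (Vs :&: RRset t S psi v != set0) = (v \in At t (S :|: Vs) psi :\: At t S psi).
Proof.
rewrite /RRset disjoint_Rv /At reachU !inE.
by case: (v \in reach _ _ S) => /=; rewrite ?setI0 ?eqxx // meet_Rv.
Qed.

Lemma Delta_t_RRset (R : realFieldType) S Vs :
  Delta_t R t S Vs psi =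
  \sum_(v in ~: S) (if Vs :&: RRset t S psi v != set0 then 1 else 0).
Proof.
have sub_reachS : At t S psi \subset At t (S :|: Vs) psi.
  by rewrite /At reachU subsetUl.
have gain_notS : At t (S :|: Vs) psi :\: At t S psi \subset ~: S.
  by rewrite setDE (subset_trans (subsetIr _ _)) // setCS sub_reach.
under eq_bigr do rewrite meet_RRset.
rewrite /Delta_t -big_mkcondr sumr_const -natrB ?subset_leq_card // -cardsDS //.
congr (_%:R); apply: eq_card => v.
by rewrite [RHS]inE andb_idl // => /(subsetP gain_notS).
Qed.

End RRSet.

Section Edgewise.
Variable T : finType.
Implicit Types A B : {set T}.

Lemma subset_forallE A B : (A \subset B) = [forall x, (x \in A) ==> (x \in B)].
Proof. by apply/subsetP/forallP => AB x; apply/implyP/AB. Qed.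

Lemma disjoint_forallE A B : [disjoint A & B] = [forall x, ~~ ((x \in A) && (x \in B))].
Proof.
rewrite disjoints_subset subset_forallE; apply: eq_forallb => x.
by rewrite inE; case: (x \in A).
Qed.

Lemma eqset_forallE A B : (A == B) = [forall x, (x \in A) == (x \in B)].
Proof.
by apply/eqP/forallP => [-> x | AB]; [rewrite eqxx | apply/setP => x; apply/eqP].
Qed.

Lemma andb_forallE (P Q : pred T) :
  [forall x, P x] && [forall x, Q x] = [forall x, P x && Q x].
Proof.
apply/andP/forallP => [[/forallP P_ /forallP Q_] x | PQ]; first by rewrite P_ Q_.
by split; apply/forallP => x; case/andP: (PQ x).
Qed.

End Edgewise.

(* Every condition on realizations is a conjunction over edges, so after
   rewriting with [edgewiseE] an identity between them is a truth table on
   the memberships of a single edge, closed by [do !case: (_ \in _)]. *)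
Definition edgewiseE := (subset_forallE, disjoint_forallE, eqset_forallE, andb_forallE).

Section Completion.
Variables (V : finType) (E : {set V * V}) (phi : realization V).

Definition free_edges : {set V * V} := E :\: (phi.1 :|: phi.2).

Definition completion (X : {set V * V}) : realization V :=
  (phi.1 :|: X, phi.2 :|: (free_edges :\: X)).

Lemma completionK psi :
  is_full E psi -> prec phi psi -> completion (psi.1 :\: phi.1) = psi.
Proof.
case: psi => L D; rewrite /is_full /is_realization /prec /= !edgewiseE.
move=> /forallP psi_full /forallP phi_psi; congr pair; apply/setP => e.
  by move: (phi_psi e); rewrite !inE; do !case: (_ \in _).
by move: (psi_full e) (phi_psi e); rewrite !inE; do !case: (_ \in _).
Qed.

Lemma cond_pr_completion (R : realFieldType) (p : V * V -> R) (X : {set V * V}) :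
  X \subset free_edges ->
  cond_pr p phi (completion X) =
  \prod_(e in free_edges) (if e \in X then p e else 1 - p e).
Proof.
rewrite subset_forallE => /forallP X_free; rewrite /cond_pr [RHS](big_setID X) /=.
congr (_ * _); apply: eq_big => e;
  by move: (X_free e); rewrite /free_edges !inE; do !case: (_ \in _).
Qed.

Hypothesis phi_real : is_realization E phi.

Lemma completion_fullE X :
  (is_full E (completion X) && prec phi (completion X)) &&
  ((completion X).1 :\: phi.1 == X) = (X \subset free_edges).
Proof.
move: phi_real; rewrite /is_full /is_realization /prec /= !edgewiseE.
move/forallP => phi_realE; apply: eq_forallb => e.
by move: (phi_realE e); rewrite !inE; do !case: (_ \in _).
Qed.

Lemma sum_full_extensions (R : realFieldType) (p : V * V -> R)
    (F : realization V -> R) :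
  \sum_(psi | is_full E psi && prec phi psi) cond_pr p phi psi * F psi =
  \sum_(X : {set V * V} | X \subset free_edges)
     (\prod_(e in free_edges) (if e \in X then p e else 1 - p e)) * F (completion X).
Proof.
rewrite (reindex_onto completion (fun psi => psi.1 :\: phi.1)) /=; last first.
  by move=> psi /andP[]; apply: completionK.
apply: eq_big => X; first exact: completion_fullE.
by rewrite completion_fullE => /cond_pr_completion ->.
Qed.

End Completion.

Theorem lemma5 (V : finType) (R : realFieldType) (E : {set V * V})
  (p : V * V -> R) (hp : forall e, e \in E -> 0 < p e <= 1)
  (S : {set V}) (hS : S != [set: V])
  (phi : realization V) (hphi : is_realization E phi)
  (t : nat) (ht : (0 < t)%N) (Vs : {set V}) :
  (#|V|%:R - #|S|%:R) * RR_expect E p t S Vs phi = Delta_f E p t S Vs phi.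
Proof.
have card_notS : #|V|%:R - #|S|%:R = #|~: S|%:R :> R.
  by rewrite -(cardsC S) natrD addrAC subrr add0r.
have notS_neq0 : #|~: S|%:R != 0 :> R.
  by rewrite pnatr_eq0 -lt0n card_gt0 -setCT (inj_eq (@setC_inj _)).
rewrite /Delta_f sum_full_extensions // /RR_expect mulr_sumr.
by apply: eq_bigr => X _; rewrite Delta_t_RRset -mulr_sumr card_notS mulrCA mulVKf.
Qed.
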